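(* Let $f$ be an L-additive arithmetic function whose associated completely multiplicative function $h_f$ is nonzero-valued, and let $\Lambda_f$ be the generalized von Mangoldt function associated to $f$. Then for every positive integer $n$, $$\Lambda_f(n)=\sum_{d\mid n}\mu\!\left(\frac{n}{d}\right)\frac{f(d)}{h_f(d)}=-\sum_{d\mid n}\frac{\mu(d)f(d)}{h_f(d)},$$ i.e. $\Lambda_f=\mu\ast\frac{f}{h_f}=-1\ast\frac{\mu f}{h_f}$.
   Context: An arithmetic function $f:\mathbb{N}\to\mathbb{C}$ is L-additive if there is a completely multiplicative function $h_f$ such that $f(mn)=f(m)h_f(n)+f(n)h_f(m)$ for all positive integers $m,n$; such an $h_f$ is fixed. $\Lambda_f(n)=\frac{f(p)}{h_f(p)}$ if $n=p^k$ for some prime $p$ and integer $k\geq 1$, and $\Lambda_f(n)=0$ otherwise. $\mu$ is the Möbius function, $1$ denotes the constant function $1(n)=1$, $\ast$ is Dirichlet convolution $(F\ast G)(n)=\sum_{d\mid n}F(d)G(n/d)$, and quotients/products of arithmetic functions such as $f/h_f$, $\mu f/h_f$ are pointwise. *)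

(* Arithmetic functions are modelled as nat -> algC;
   only their values at positive integers matter. *)
From mathcomp Require Import all_boot all_order all_algebra all_field.
Set Implicit Arguments. Unset Strict Implicit. Unset Printing Implicit Defensive.
Import GRing.Theory Num.Theory.
Local Open Scope ring_scope.

Definition arith := nat -> algC.

Definition completely_multiplicative (h : arith) : Prop :=
  h 1%N = 1 /\ forall m n : nat, (0 < m)%N -> (0 < n)%N -> h (m * n)%N = h m * h n.

Definition L_additive_wrt (f h : arith) : Prop :=
  completely_multiplicative h /\
  forall m n : nat, (0 < m)%N -> (0 < n)%N ->
    f (m * n)%N = f m * h n + f n * h m.

Definition moebius (n : nat) : algC :=
  if [forall p : 'I_n.+1, (logn p n <= 1)%N]
  then (-1) ^+ size (primes n) else 0.

(* generalized von Mangoldt function: f(p)/h(p) if n = p^k, k >= 1, else 0 *)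
Definition vonMangoldt_f (f h : arith) (n : nat) : algC :=
  if (1 < n)%N && (size (primes n) == 1%N)
  then f (pdiv n) / h (pdiv n) else 0.

Definition dconv (F G : arith) (n : nat) : algC :=
  \sum_(d <- divisors n) F d * G (n %/ d)%N.

Definition const1 : arith := fun _ => 1.

From mathcomp Require Import all_boot all_order all_algebra all_field.
From mathcomp Require Import ring.
Import GRing.Theory Num.Theory.
Local Open Scope ring_scope.

(* The quotient g = f / h_f is completely additive, and Lambda_f(n) is g(p)
   when n is a power of the prime p, 0 otherwise.  Write n = m p^a with p
   prime, a > 0 and p coprime to m: the divisors of n with a nonzero Moebius
   weight are the d and d p with d | m, so
     sum_(d | n) mu(d) g(d) = sum_(d | m) mu(d) (g(d) - g(d p))
                            = - g(p) sum_(d | m) mu(d) = - g(p) [m = 1],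
   which is - Lambda_f(n).  Reindexing d -> n/d and g(n/d) = g(n) - g(d) give
   the convolution forms. *)

Lemma perm_divisors_div {n} : (0 < n)%N ->
  perm_eq [seq (n %/ d)%N | d <- divisors n] (divisors n).
Proof.
move=> n_gt0.
have divK d : d \in divisors n -> (n %/ (n %/ d))%N = d.
  by rewrite -dvdn_divisors // => dn; rewrite divnA // mulKn.
apply: uniq_perm; rewrite ?divisors_uniq //.
  rewrite map_inj_in_uniq ?divisors_uniq // => d e dn en.
  by move/(congr1 (divn n)); rewrite !divK.
have div_in d : d \in divisors n -> (n %/ d)%N \in divisors n.
  by rewrite -!dvdn_divisors // => /dvdn_div.
move=> x; apply/mapP/idP => [[d /div_in dn ->] //|xn].
by exists (n %/ x)%N; rewrite ?divK ?div_in.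
Qed.

Lemma prime_coprime_gt0 {p m : nat} : prime p -> coprime p m -> (0 < m)%N.
Proof. by case: m => // pp; rewrite /coprime gcdn0 => /eqP p1; rewrite p1 in pp. Qed.

Lemma perm_divisors_pfactorM {p} a {m} : prime p -> coprime p m ->
  perm_eq (divisors (m * p ^ a))
          [seq (d * p ^ i)%N | i <- index_iota 0 a.+1, d <- divisors m].
Proof.
move=> pp cpm; have m_gt0 := prime_coprime_gt0 pp cpm.
have pX_gt0 i : (0 < p ^ i)%N by rewrite expn_gt0 prime_gt0.
have n_gt0 : (0 < m * p ^ a)%N by rewrite muln_gt0 m_gt0 pX_gt0.
have coprime_div d : d \in divisors m -> coprime p d.
  by rewrite -dvdn_divisors // => /coprime_dvdr; apply.
have lognMpX d i : coprime p d -> logn p (d * p ^ i) = i.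
  by move=> cpd; rewrite logn_Gauss // pfactorK.
apply: uniq_perm; rewrite ?divisors_uniq //.
  apply: allpairs_uniq; rewrite ?iota_uniq ?divisors_uniq // => x y.
  move=> /allpairsP[[i d] [_ dm ->]] /allpairsP[[j e] [_ em ->]] /= E.
  have eq_ij : i = j.
    by rewrite -(lognMpX d i) ?coprime_div // E lognMpX ?coprime_div.
  by move: E; rewrite eq_ij => /eqP; rewrite eqn_pmul2r // => /eqP ->.
move=> x; rewrite -dvdn_divisors //; apply/idP/allpairsP.
  move=> xn; have [d cpd xE] := pfactor_coprime pp (dvdn_gt0 n_gt0 xn).
  exists (logn p x, d); split => //=.
    by rewrite mem_index_iota /= ltnS -[a in (_ <= a)%N](lognMpX m a cpm) dvdn_leq_log.
  rewrite -dvdn_divisors // -(@Gauss_dvdl _ _ (p ^ a)).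
    by apply: dvdn_trans xn; rewrite {1}xE dvdn_mulr.
  by rewrite coprimeXr // coprime_sym.
move=> [[i d] /= [ia dm ->]]; apply: dvdn_mul; first by rewrite dvdn_divisors.
by apply: dvdn_exp2l; rewrite mem_index_iota ltnS in ia.
Qed.

Lemma perm_primes_pfactorM {p} a {m} : prime p -> coprime p m -> (0 < a)%N ->
  perm_eq (primes (m * p ^ a)) (p :: primes m).
Proof.
move=> pp cpm a_gt0; have m_gt0 := prime_coprime_gt0 pp cpm.
apply: uniq_perm; rewrite /= ?primes_uniq ?andbT //.
  by apply: contraL cpm; rewrite mem_primes prime_coprime // negbK => /and3P[].
have pX_gt0 : (0 < p ^ a)%N by rewrite expn_gt0 prime_gt0.
by move=> q; rewrite primesM // primesX // (primes_prime pp) !inE orbC.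
Qed.

Lemma logn_le1P {n} : (0 < n)%N ->
  reflect (forall q, logn q n <= 1)%N [forall q : 'I_n.+1, logn q n <= 1]%N.
Proof.
move=> n_gt0; apply: (iffP forallP) => [le1 q|le1 q]; last exact: le1.
have [qn|nq] := ltnP q n.+1; first exact: (le1 (Ordinal qn)).
by rewrite ltn_log0.
Qed.

Lemma moebius1 : moebius 1 = 1.
Proof. by rewrite /moebius; case: (logn_le1P _) => // -[] q; rewrite logn1. Qed.

Lemma moebiusMprime p d : prime p -> coprime p d ->
  moebius (d * p) = - moebius d.
Proof.
move=> pp cpd; have d_gt0 := prime_coprime_gt0 pp cpd.
have p_gt0 := prime_gt0 pp; have dp_gt0 : (0 < d * p)%N by rewrite muln_gt0 d_gt0.
have lognMp q : logn q (d * p) = (logn q d + (q == p))%N.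
  by rewrite lognM // (logn_prime _ pp).
have sqf_eq : [forall q : 'I_(d * p)%N.+1, logn q (d * p) <= 1]%N =
              [forall q : 'I_d.+1, logn q d <= 1]%N.
  apply/(logn_le1P dp_gt0)/(logn_le1P d_gt0) => le1 q.
    by rewrite (leq_trans _ (le1 q)) // lognMp leq_addr.
  by rewrite lognMp; case: eqP => [->|_]; rewrite ?(logn_coprime cpd) ?addn0.
rewrite /moebius sqf_eq (perm_size (perm_primes_pfactorM 1 pp cpd isT)).
by case: ifP; rewrite ?oppr0 // exprS mulN1r.
Qed.

Lemma moebiusMpfactor p i d : prime p -> (0 < d)%N -> (1 < i)%N ->
  moebius (d * p ^ i) = 0.
Proof.
move=> pp d_gt0 i_gt1; have pX_gt0 : (0 < p ^ i)%N by rewrite expn_gt0 prime_gt0.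
have n_gt0 : (0 < d * p ^ i)%N by rewrite muln_gt0 d_gt0.
rewrite /moebius; case: (logn_le1P n_gt0) => // /(_ p).
by rewrite lognM // pfactorK // leqNgt (leq_trans i_gt1) ?leq_addl.
Qed.

Lemma sum_moebius_pfactorM (G : nat -> algC) p a m :
  prime p -> coprime p m -> (0 < a)%N ->
  \sum_(d <- divisors (m * p ^ a)) moebius d * G d
    = \sum_(d <- divisors m) moebius d * (G d - G (d * p)%N).
Proof.
move=> pp cpm; have m_gt0 := prime_coprime_gt0 pp cpm; case: a => // a _.
rewrite (perm_big _ (perm_divisors_pfactorM a.+1 pp cpm)) big_allpairs_dep /=.
rewrite big_nat_recl // big_nat_recl // [X in _ + (_ + X)]big1 => [|i _]; last first.
  rewrite big1_seq // => d /andP[_]; rewrite -dvdn_divisors // => dm.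
  by rewrite moebiusMpfactor ?mul0r // (dvdn_gt0 m_gt0 dm).
rewrite addr0 -big_split /=; apply: eq_big_seq => d; rewrite -dvdn_divisors // => dm.
by rewrite muln1 expn1 moebiusMprime ?(coprime_dvdr dm) // mulrBr mulNr.
Qed.

Lemma pdiv_logn_gt0 {n} : (1 < n)%N -> (0 < logn (pdiv n) n)%N.
Proof. by move=> n_gt1; rewrite logn_gt0 mem_primes pdiv_prime // pdiv_dvd ltnW. Qed.

Lemma sum_moebius n : (0 < n)%N ->
  \sum_(d <- divisors n) moebius d = (n == 1)%N%:R.
Proof.
case: n => // -[_|n _]; first by rewrite big_seq1 moebius1.
have n_gt1 : (1 < n.+2)%N by [].
have [m cpm nE] := pfactor_coprime (pdiv_prime n_gt1) (ltnW n_gt1).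
rewrite (eq_bigr (fun d => moebius d * 1)) => [|d _]; last by rewrite mulr1.
rewrite [in LHS]nE sum_moebius_pfactorM ?pdiv_logn_gt0 ?pdiv_prime //.
by rewrite big1 // => d _; rewrite subrr mulr0.
Qed.

Lemma dconvC (F G : arith) n : (0 < n)%N -> dconv F G n = dconv G F n.
Proof.
move=> n_gt0; rewrite /dconv -(perm_big _ (perm_divisors_div n_gt0)) big_map.
apply: eq_big_seq => d; rewrite -dvdn_divisors // => dn.
by rewrite divnA // mulKn // mulrC.
Qed.

Definition completely_additive (g : arith) : Prop :=
  forall m n : nat, (0 < m)%N -> (0 < n)%N -> g (m * n)%N = g m + g n.

Lemma L_additive_div {f h : arith} : L_additive_wrt f h ->
  (forall n : nat, (0 < n)%N -> h n != 0) ->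
  completely_additive (fun n => f n / h n).
Proof.
move=> [[_ hM] fM] h_neq0 m n m_gt0 n_gt0.
rewrite fM // hM //; have := h_neq0 _ m_gt0; have := h_neq0 _ n_gt0.
by move=> hn_neq0 hm_neq0; field; rewrite hn_neq0 hm_neq0.
Qed.

Definition additive_vonMangoldt (g : arith) (n : nat) : algC :=
  if (1 < n)%N && (size (primes n) == 1%N) then g (pdiv n) else 0.

Section CompletelyAdditive.

Context {g : arith} (gM : completely_additive g).

Lemma completely_additive1 : g 1%N = 0.
Proof. by apply: (@addrI _ (g 1%N)); rewrite -gM // addr0. Qed.

Lemma sum_moebius_additive {n} : (0 < n)%N ->
  \sum_(d <- divisors n) moebius d * g d = - additive_vonMangoldt g n.
Proof.
case: n => // -[_|n _].
  by rewrite big_seq1 completely_additive1 mulr0 oppr0.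
have n_gt1 : (1 < n.+2)%N by [].
set p := pdiv n.+2; have [pp a_gt0] := (pdiv_prime n_gt1, pdiv_logn_gt0 n_gt1).
have [m cpm nE] := pfactor_coprime pp (ltnW n_gt1).
have m_gt0 := prime_coprime_gt0 pp cpm.
rewrite /additive_vonMangoldt -/p [in LHS]nE [in primes _]nE sum_moebius_pfactorM //.
rewrite (eq_big_seq (fun d => moebius d * - g p)) => [|d]; last first.
  rewrite -dvdn_divisors // => dm.
  by rewrite gM ?(dvdn_gt0 m_gt0 dm) ?prime_gt0 // opprD addNKr.
rewrite -big_distrl /= sum_moebius //.
rewrite (perm_size (perm_primes_pfactorM _ pp cpm a_gt0)) /= eqSS size_eq0 primes_eq0.
have -> : (m < 2)%N = (m == 1)%N by case: m {cpm nE} m_gt0 => [|[|]].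
by case: (m == 1)%N; [rewrite mul1r | rewrite mul0r oppr0].
Qed.

Lemma dconv_moebius_additive {n} : (0 < n)%N ->
  dconv moebius g n = additive_vonMangoldt g n.
Proof.
move=> n_gt0; rewrite /dconv.
rewrite (eq_big_seq (fun d => moebius d * g n - moebius d * g d)) => [|d]; last first.
  rewrite -dvdn_divisors // => dn; have d_gt0 := dvdn_gt0 n_gt0 dn.
  have q_gt0 : (0 < n %/ d)%N by rewrite divn_gt0 // dvdn_leq.
  have nE : n = (d * (n %/ d))%N by rewrite mulnC divnK.
  by rewrite -mulrBr [in g n]nE (gM _ _ d_gt0 q_gt0) addrC addKr.
rewrite sumrB -big_distrl /= sum_moebius // sum_moebius_additive // opprK.
by case: eqP => [->|_]; rewrite ?completely_additive1 ?mulr0 ?mul0r add0r.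
Qed.

End CompletelyAdditive.

Theorem theorem2p2 (f h : nat -> algC)
  (hLadd : L_additive_wrt f h)
  (hnz : forall n : nat, (0 < n)%N -> h n != 0) :
  forall n : nat, (0 < n)%N ->
    (vonMangoldt_f f h n
       = \sum_(d <- divisors n) moebius (n %/ d)%N * (f d / h d) /\
     vonMangoldt_f f h n
       = - \sum_(d <- divisors n) moebius d * f d / h d) /\
    (vonMangoldt_f f h n = dconv moebius (fun d => f d / h d) n /\
     vonMangoldt_f f h n
       = - dconv const1 (fun d => moebius d * f d / h d) n).
Proof.
move=> n n_gt0; have gM := L_additive_div hLadd hnz.
have conv_form : vonMangoldt_f f h n = dconv moebius (fun d => f d / h d) n.
  by rewrite (dconv_moebius_additive gM n_gt0).
have sum_form :
    vonMangoldt_f f h n = - \sum_(d <- divisors n) moebius d * f d / h d.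
  rewrite -(eq_bigr _ (fun d _ => mulrA _ _ _)).
  by rewrite (sum_moebius_additive gM n_gt0) opprK.
split; split => //.
  by rewrite conv_form dconvC //; apply: eq_bigr => d _; rewrite mulrC.
by rewrite sum_form dconvC //; congr (- _); apply: eq_bigr => d _; rewrite mulr1.
Qed.
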